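(* Let $R,LM,C,\widetilde C,Ceq,\widetilde{Ceq}$ be as below and assume all conditions (1.1)–(7b) listed below hold; let $\sim,\simeq$ be as below. Then: (i) if $(\Gamma,T)\in C$, $\Gamma'\in C$ and $\Gamma\sim\Gamma'$, there exists $T'$ with $(\Gamma',T')\in C$ and $(\Gamma,T)\sim(\Gamma',T')$; (ii) if $(\Gamma\vdash o:S)\in\widetilde C$ and $(\Gamma,S)\sim(\Gamma',S')$ with $(\Gamma',S')\in C$, there exists $o'$ with $(\Gamma'\vdash o':S')\in\widetilde C$ and $(\Gamma'\vdash o':S')\simeq(\Gamma\vdash o:S)$. Conditions (for all well-formed data, $n=l(\Gamma)$, $i=l(\Gamma_1)$): (1.1) $(\rhd)$; (1.2) $(\Gamma,T\rhd)\Rightarrow(\Gamma\rhd)$; (1.3) $(\Gamma\vdash r:R)\Rightarrow(\Gamma,R\rhd)$; (1.4) $(\Gamma,T\rhd)\wedge(\Gamma,\Delta\vdash r:R)\Rightarrow(\Gamma,T,t_{n+1}\Delta\vdash t_{n+1}r:t_{n+1}R)$; (1.5) $(\Gamma\vdash s:S)\wedge(\Gamma,S,\Delta\vdash r:R)\Rightarrow(\Gamma,s_{n+1}(\Delta[s/n+1])\vdash s_{n+1}(r[s/n+1]):s_{n+1}(R[s/n+1]))$; (1.6) $(\Gamma,T\rhd)\Rightarrow(\Gamma,T\vdash n+1:t_{n+1}T)$; (2a) $(\Gamma\vdash T=T')\Rightarrow(\Gamma,T\rhd)$; (2b) $(\Gamma,T\rhd)\Rightarrow(\Gamma\vdash T=T)$;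 (2c) symmetry and (2d) transitivity of $(\Gamma\vdash T=T')$ in $T,T'$; (3a) $(\Gamma\vdash o=o':T)\Rightarrow(\Gamma\vdash o:T)$; (3b) $(\Gamma\vdash o:T)\Rightarrow(\Gamma\vdash o=o:T)$; (3c) symmetry and (3d) transitivity of $(\Gamma\vdash o=o':T)$ in $o,o'$; (4a) $(\Gamma_1\vdash T=T')\wedge(\Gamma_1,T,\Gamma_2\vdash S=S')\Rightarrow(\Gamma_1,T',\Gamma_2\vdash S=S')$; (4b) $(\Gamma_1\vdash T=T')\wedge(\Gamma_1,T,\Gamma_2\vdash o=o':S)\Rightarrow(\Gamma_1,T',\Gamma_2\vdash o=o':S)$; (4c) $(\Gamma\vdash S=S')\wedge(\Gamma\vdash o=o':S)\Rightarrow(\Gamma\vdash o=o':S')$; (5a) $(\Gamma_1,T\rhd)\wedge(\Gamma_1,\Gamma_2\vdash S=S')\Rightarrow(\Gamma_1,T,t_{i+1}\Gamma_2\vdash t_{i+1}S=t_{i+1}S')$; (5b) $(\Gamma_1,T\rhd)\wedge(\Gamma_1,\Gamma_2\vdash o=o':S)\Rightarrow(\Gamma_1,T,t_{i+1}\Gamma_2\vdash t_{i+1}o=t_{i+1}o':t_{i+1}S)$; (6a) $(\Gamma_1,T,\Gamma_2\vdash S=S')\wedge(\Gamma_1\vdash r:T)\Rightarrow(\Gamma_1,s_{i+1}(\Gamma_2[r/i+1])\vdash s_{i+1}(S[r/i+1])=s_{i+1}(S'[r/i+1]))$; (6b) the analogous statement for $(\Gamma_1,T,\Gamma_2\vdash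 o=o':S)$, concluding $(\Gamma_1,s_{i+1}(\Gamma_2[r/i+1])\vdash s_{i+1}(o[r/i+1])=s_{i+1}(o'[r/i+1]):s_{i+1}(S[r/i+1]))$; (7a) $(\Gamma_1,T,\Gamma_2,S\rhd)\wedge(\Gamma_1\vdash r=r':T)\Rightarrow(\Gamma_1,s_{i+1}(\Gamma_2[r/i+1])\vdash s_{i+1}(S[r/i+1])=s_{i+1}(S[r'/i+1]))$; (7b) $(\Gamma_1,T,\Gamma_2\vdash o:S)\wedge(\Gamma_1\vdash r=r':T)\Rightarrow(\Gamma_1,s_{i+1}(\Gamma_2[r/i+1])\vdash s_{i+1}(o[r/i+1])=s_{i+1}(o[r'/i+1]):s_{i+1}(S[r/i+1]))$.
   Context: $[n]=\{1,\dots,n\}$. $R$ is a monad on Sets (unit $\eta$, Kleisli extension $\mathrm{bind}$), $LM$ a left $R$-module with action $\rho(f):LM(X)\to LM(Y)$ for $f:X\to R(Y)$. Elements of $Y$ are regarded in $R(Y)$ via $\eta_Y$; $E(f_1/1,\dots,f_m/m)$ is $\rho(f)(E)$ or $\mathrm{bind}(f)(E)$ with $f(i)=f_i$. For $E$ in $LM([m])$ or $R([m])$, $m\ge n$: $t_{n+1}E:=E(1/1,\dots,n/n,n+2/n+1,\dots,m+1/m)$; for $m\ge n+1$, $s\in R([n])$: $s_{n+1}(E[s/n+1]):=E(1/1,\dots,n/n,s/n+1,n+1/n+2,\dots,m-1/m)$; both applied componentwise to sequences. $C,\widetilde C,Ceq,\widetilde{Ceq}$ are subsets of $\coprod_n\prod_{j<n}LM([j])$,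 $\coprod_n(\prod_{j\le n}LM([j]))\times R([n])$, $\coprod_n(\prod_{j<n}LM([j]))\times LM([n])^2$, $\coprod_n(\prod_{j\le n}LM([j]))\times R([n])^2$. Contexts: $\Gamma=(T_1,\dots,T_n)$, $T_j\in LM([j-1])$, $l(\Gamma)=n$, $ft$ drops the last entry, commas concatenate. $(\Gamma\rhd)$: $\Gamma\in C$; $(\Gamma\vdash t:T)$: $(\Gamma,T,t)\in\widetilde C$; $(\Gamma\vdash S=S')$: $(\Gamma,S,S')\in Ceq$; $(\Gamma\vdash o=o':S)$: $(\Gamma,S,o,o')\in\widetilde{Ceq}$. $\sim$ on $C$: $(T_1,\dots,T_n)\sim(T'_1,\dots,T'_n)$ iff $n=0$ or ($ft$'s related and $(T_1,\dots,T_{n-1}\vdash T_n=T'_n)$); different lengths never related. $\simeq$ on $\widetilde C$: $(\Gamma\vdash o:S)\simeq(\Gamma'\vdash o':S')$ iff $(\Gamma,S)\sim(\Gamma',S')$ and $(\Gamma\vdash o=o':S)$. *)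

From mathcomp Require Import all_boot.
Set Implicit Arguments. Unset Strict Implicit. Unset Printing Implicit Defensive.

(* CONVENTION: the set [m] = {1,..,m} of the paper is modelled by 'I_m,
   the ordinal of value x : 'I_m standing for the element x+1 of [m]. *)

Record monad := Monad {
  mT :> Type -> Type;
  ret : forall X, X -> mT X;
  bind : forall X Y, (X -> mT Y) -> mT X -> mT Y;
  bind_ret : forall X (x : mT X), bind (@ret X) x = x;
  bind_ret_l : forall X Y (f : X -> mT Y) (x : X), bind f (ret x) = f x;
  bind_bind : forall X Y Z (f : X -> mT Y) (g : Y -> mT Z) (x : mT X),
      bind g (bind f x) = bind (fun y => bind g (f y)) x }.
Arguments ret {m X}.
Arguments bind {m X Y}.

Record lmodule (R : monad) := LModule {
  lT :> Type -> Type;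
  act : forall X Y, (X -> R Y) -> lT X -> lT Y;
  act_ret : forall X (E : lT X), act (@ret R X) E = E;
  act_act : forall X Y Z (f : X -> R Y) (g : Y -> R Z) (E : lT X),
      act g (act f E) = act (fun y => bind g (f y)) E }.
Arguments act {R l X Y}.

Section Syntax.
Variable R : monad.
Variable LM : lmodule R.

Inductive ctx : nat -> Type :=
| cnil : ctx 0
| csnoc n : ctx n -> LM 'I_n -> ctx n.+1.

(* Extensions Delta = (T_{n+1}, ..., T_{n+k}) of a context of length n,
   with T_{n+j} in LM([n+j-1]). *)
Inductive ext (n : nat) : nat -> Type :=
| enil : ext n 0
| esnoc k : ext n k -> LM 'I_(k + n) -> ext n k.+1.
Arguments enil {n}.

Fixpoint app n k (G : ctx n) (D : ext n k) : ctx (k + n) :=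
  match D in ext _ k return ctx (k + n) with
  | enil => G
  | esnoc k D' E => csnoc (app G D') E
  end.

Lemma piv_subproof n k : n < (k + n).+1.
Proof. by rewrite ltnS leq_addl. Qed.

(* the position n+1 (0-based: n) in [k+n+1] *)
Definition piv n k : 'I_(k + n).+1 := Ordinal (piv_subproof n k).

(* t_{n+1}: the map [m] -> R([m+1]) (m = k+n), j |-> j (j<=n), j |-> j+1 (j>n) *)
Definition tfun n k (x : 'I_(k + n)) : R 'I_(k + n.+1) :=
  ret (cast_ord (esym (addnS k n)) (lift (piv n k) x)).
Arguments tfun : clear implicits.

(* s_{n+1}(_[s/n+1]): the map [m] -> R([m-1]) (m = k+n+1),
   j |-> j (j<=n), n+1 |-> s (s in R([n]) seen in R([m-1])), j |-> j-1 (j>n+1) *)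
Definition sfun n k (s : R 'I_n) (x : 'I_(k + n.+1)) : R 'I_(k + n) :=
  match unlift (piv n k) (cast_ord (addnS k n) x) with
  | Some y => ret y
  | None => bind (fun y => ret (widen_ord (leq_addl k n) y)) s
  end.
Arguments sfun : clear implicits.

Definition tE n k (E : LM 'I_(k + n)) : LM 'I_(k + n.+1) := act (tfun n k) E.
Definition tR n k (r : R 'I_(k + n)) : R 'I_(k + n.+1) := bind (tfun n k) r.
Definition sE n k (s : R 'I_n) (E : LM 'I_(k + n.+1)) : LM 'I_(k + n) :=
  act (sfun n k s) E.
Definition sR n k (s : R 'I_n) (r : R 'I_(k + n.+1)) : R 'I_(k + n) :=
  bind (sfun n k s) r.

Arguments tE : clear implicits.
Arguments tR : clear implicits.
Arguments sE : clear implicits.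
Arguments sR : clear implicits.

Fixpoint text n k (D : ext n k) : ext n.+1 k :=
  match D in ext _ k return ext n.+1 k with
  | enil => enil
  | esnoc k D' E => esnoc (text D') (tE n k E)
  end.

Fixpoint sext n k (s : R 'I_n) (D : ext n.+1 k) : ext n k :=
  match D in ext _ k return ext n k with
  | enil => enil
  | esnoc k D' E => esnoc (sext s D') (sE n k s E)
  end.

Variable C : forall n, ctx n -> Prop.
Variable Ct : forall n, ctx n -> LM 'I_n -> R 'I_n -> Prop.            (* Gamma |- t : T, as (Gamma,T,t) *)
Variable Ceq : forall n, ctx n -> LM 'I_n -> LM 'I_n -> Prop.
Variable Cteq : forall n, ctx n -> LM 'I_n -> R 'I_n -> R 'I_n -> Prop.

Record conditions : Prop := {
  c1_1 : C cnil;
  c1_2 : forall n (G : ctx n) T, C (csnoc G T) -> C G;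
  c1_3 : forall n (G : ctx n) T r, Ct G T r -> C (csnoc G T);
  c1_4 : forall n (G : ctx n) T k (D : ext n k) T0 r,
      C (csnoc G T) -> Ct (app G D) T0 r ->
      Ct (app (csnoc G T) (text D)) (tE n k T0) (tR n k r);
  c1_5 : forall n (G : ctx n) S s k (D : ext n.+1 k) T0 r,
      Ct G S s -> Ct (app (csnoc G S) D) T0 r ->
      Ct (app G (sext s D)) (sE n k s T0) (sR n k s r);
  c1_6 : forall n (G : ctx n) T,
      C (csnoc G T) -> Ct (csnoc G T) (tE n 0 T) (ret (ord_max : 'I_n.+1));
  c2a : forall n (G : ctx n) T T', Ceq G T T' -> C (csnoc G T);
  c2b : forall n (G : ctx n) T, C (csnoc G T) -> Ceq G T T;
  c2c : forall n (G : ctx n) T T', Ceq G T T' -> Ceq G T' T;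
  c2d : forall n (G : ctx n) T T' T'', Ceq G T T' -> Ceq G T' T'' -> Ceq G T T'';
  c3a : forall n (G : ctx n) T o o', Cteq G T o o' -> Ct G T o;
  c3b : forall n (G : ctx n) T o, Ct G T o -> Cteq G T o o;
  c3c : forall n (G : ctx n) T o o', Cteq G T o o' -> Cteq G T o' o;
  c3d : forall n (G : ctx n) T o o' o'', Cteq G T o o' -> Cteq G T o' o'' -> Cteq G T o o'';
  c4a : forall i (G1 : ctx i) T T' k (G2 : ext i.+1 k) S S',
      Ceq G1 T T' -> Ceq (app (csnoc G1 T) G2) S S' -> Ceq (app (csnoc G1 T') G2) S S';
  c4b : forall i (G1 : ctx i) T T' k (G2 : ext i.+1 k) S o o',
      Ceq G1 T T' -> Cteq (app (csnoc G1 T) G2) S o o' -> Cteq (app (csnoc G1 T') G2) S o o';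
  c4c : forall n (G : ctx n) S S' o o', Ceq G S S' -> Cteq G S o o' -> Cteq G S' o o';
  c5a : forall i (G1 : ctx i) T k (G2 : ext i k) S S',
      C (csnoc G1 T) -> Ceq (app G1 G2) S S' ->
      Ceq (app (csnoc G1 T) (text G2)) (tE i k S) (tE i k S');
  c5b : forall i (G1 : ctx i) T k (G2 : ext i k) S o o',
      C (csnoc G1 T) -> Cteq (app G1 G2) S o o' ->
      Cteq (app (csnoc G1 T) (text G2)) (tE i k S) (tR i k o) (tR i k o');
  c6a : forall i (G1 : ctx i) T k (G2 : ext i.+1 k) S S' r,
      Ceq (app (csnoc G1 T) G2) S S' -> Ct G1 T r ->
      Ceq (app G1 (sext r G2)) (sE i k r S) (sE i k r S');
  c6b : forall i (G1 : ctx i) T k (G2 : ext i.+1 k) S o o' r,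
      Cteq (app (csnoc G1 T) G2) S o o' -> Ct G1 T r ->
      Cteq (app G1 (sext r G2)) (sE i k r S) (sR i k r o) (sR i k r o');
  c7a : forall i (G1 : ctx i) T k (G2 : ext i.+1 k) S r r',
      C (csnoc (app (csnoc G1 T) G2) S) -> Cteq G1 T r r' ->
      Ceq (app G1 (sext r G2)) (sE i k r S) (sE i k r' S);
  c7b : forall i (G1 : ctx i) T k (G2 : ext i.+1 k) S o r r',
      Ct (app (csnoc G1 T) G2) S o -> Cteq G1 T r r' ->
      Cteq (app G1 (sext r G2)) (sE i k r S) (sR i k r o) (sR i k r' o) }.

(* The relation ~ on contexts (contexts of different lengths are never related). *)
Inductive ctx_sim : forall n, ctx n -> ctx n -> Prop :=
| sim_nil : ctx_sim cnil cnil
| sim_snoc n (G G' : ctx n) T T' :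
    ctx_sim G G' -> Ceq G T T' -> ctx_sim (csnoc G T) (csnoc G' T').

Definition jdg_sim n (G : ctx n) (S : LM 'I_n) (o : R 'I_n)
    (G' : ctx n) (S' : LM 'I_n) (o' : R 'I_n) : Prop :=
  ctx_sim (csnoc G S) (csnoc G' S') /\ Cteq G S o o'.

End Syntax.

(* Equal types and equal terms are interchangeable in contexts: by (4a)/(4b),
   a judgement in [Γ, T, Δ] also holds in [Γ, T', Δ] whenever [Γ ⊢ T = T'], so
   by induction on [Γ ∼ Γ'] every equality judgement over [Γ, Δ] holds over
   [Γ', Δ].  Hence [T' := T] and [o' := o] are the required witnesses, using
   reflexivity (2b)/(3b), the conversion rule (4c) and symmetry (2c). *)

From mathcomp Require Import all_boot.
From Stdlib Require Eqdep_dec PeanoNat.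
Set Implicit Arguments. Unset Strict Implicit.

Section Extensions.
Variables (R : monad) (LM : lmodule R).

(* [common_ext G G' H H'] encodes [H = G, Δ] and [H' = G', Δ] for one [Δ],
   avoiding the index arithmetic [k + n] of [app]. *)
Inductive common_ext n (G G' : ctx LM n) : forall m, ctx LM m -> ctx LM m -> Prop :=
| common_ext_refl : common_ext G G' G G'
| common_ext_snoc m (H H' : ctx LM m) E :
    common_ext G G' H H' -> common_ext G G' (csnoc H E) (csnoc H' E).

Lemma common_ext_app n (G G' : ctx LM n) (P : forall m, ctx LM m -> ctx LM m -> Prop) :
  (forall k (D : ext LM n k), P _ (app G D) (app G' D)) ->
  forall m (H H' : ctx LM m), common_ext G G' H H' -> P m H H'.
Proof.
move=> PGD m H H' HH'.
have [k [D eD]] : exists k (D : ext LM n k),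
    existT (fun m => (ctx LM m * ctx LM m)%type) (k + n) (app G D, app G' D)
    = existT _ m (H, H').
  elim: HH' => [|m0 H0 H0' E _ [k [D eD]]]; first by exists 0, (enil LM n).
  have em0 : k + n = m0 := f_equal (@projT1 _ _) eD; subst m0.
  case: (Eqdep_dec.inj_pair2_eq_dec _ PeanoNat.Nat.eq_dec _ _ _ _ eD) => <- <-.
  by exists k.+1, (esnoc D E).
change ((fun p : {m & (ctx LM m * ctx LM m)%type} => P _ (projT2 p).1 (projT2 p).2)
  (existT _ m (H, H'))).
by rewrite -eD; apply: PGD.
Qed.

Lemma common_ext_split n (G G' : ctx LM n) T T' m (H H' : ctx LM m) :
  common_ext (csnoc G T) (csnoc G' T') H H' ->
  exists2 H'', common_ext (csnoc G T) (csnoc G T') H H'' & common_ext G G' H'' H'.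
Proof.
elim=> [|m0 H0 H0' E _ [H'' HH'' H''H']].
  by exists (csnoc G T'); do !constructor.
by exists (csnoc H'' E); constructor.
Qed.

Lemma common_ext_nil m (H H' : ctx LM m) : common_ext (cnil LM) (cnil LM) H H' -> H = H'.
Proof. by elim=> // m0 H0 H0' E _ ->. Qed.

Lemma ctx_sim_snocK (Ceq : forall n, ctx LM n -> LM 'I_n -> LM 'I_n -> Prop)
    n (G G' : ctx LM n) S S' :
  ctx_sim Ceq (csnoc G S) (csnoc G' S') -> ctx_sim Ceq G G' /\ Ceq n G S S'.
Proof.
move=> sim; inversion sim.
repeat match goal with
| e : existT _ _ _ = existT _ _ _ |- _ =>
    apply Eqdep_dec.inj_pair2_eq_dec in e; [subst | exact: PeanoNat.Nat.eq_dec]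
end.
by [].
Qed.

End Extensions.

Section Transport.
Variables (R : monad) (LM : lmodule R).
Variable C : forall n, ctx LM n -> Prop.
Variable Ct : forall n, ctx LM n -> LM 'I_n -> R 'I_n -> Prop.
Variable Ceq : forall n, ctx LM n -> LM 'I_n -> LM 'I_n -> Prop.
Variable Cteq : forall n, ctx LM n -> LM 'I_n -> R 'I_n -> R 'I_n -> Prop.
Hypothesis cond : conditions C Ct Ceq Cteq.

Definition eq_judgements_transfer m (H H' : ctx LM m) : Prop :=
  (forall S S', Ceq H S S' -> Ceq H' S S') /\
  (forall S o o', Cteq H S o o' -> Cteq H' S o o').

Lemma eq_judgements_transfer_trans m (H1 H2 H3 : ctx LM m) :
  eq_judgements_transfer H1 H2 -> eq_judgements_transfer H2 H3 ->
  eq_judgements_transfer H1 H3.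
Proof. by move=> [eq12 teq12] [eq23 teq23]; split=> *; [apply: eq23 | apply: teq23]; auto. Qed.

Lemma ctx_sim_transfer n (G G' : ctx LM n) : ctx_sim Ceq G G' ->
  forall m (H H' : ctx LM m), common_ext G G' H H' -> eq_judgements_transfer H H'.
Proof.
elim=> [|{}n {}G {}G' T T' _ IH eqTT'] m H H'.
  by move/common_ext_nil=> ->; split.
case/common_ext_split=> H'' HH'' /IH; apply: eq_judgements_transfer_trans.
move: HH''; apply: (common_ext_app (P := @eq_judgements_transfer)) => k D.
by split=> *; [apply: (c4a cond eqTT') | apply: (c4b cond eqTT')].
Qed.

Lemma ctx_sim_Ceq n (G G' : ctx LM n) S S' :
  ctx_sim Ceq G G' -> Ceq G S S' -> Ceq G' S S'.
Proof. by move=> sim; apply: (ctx_sim_transfer sim (common_ext_refl G G')).1. Qed.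

Lemma ctx_sim_Cteq n (G G' : ctx LM n) S o o' :
  ctx_sim Ceq G G' -> Cteq G S o o' -> Cteq G' S o o'.
Proof. by move=> sim; apply: (ctx_sim_transfer sim (common_ext_refl G G')).2. Qed.

Lemma ctx_sim_sym n (G G' : ctx LM n) : ctx_sim Ceq G G' -> ctx_sim Ceq G' G.
Proof.
elim=> [|{}n {}G {}G' T T' sim IH eqTT']; constructor=> //.
exact/(c2c cond)/(ctx_sim_Ceq sim).
Qed.

End Transport.

Theorem lemma6p5 (R : monad) (LM : lmodule R)
    (C : forall n, ctx LM n -> Prop)
    (Ct : forall n, ctx LM n -> LM 'I_n -> R 'I_n -> Prop)
    (Ceq : forall n, ctx LM n -> LM 'I_n -> LM 'I_n -> Prop)
    (Cteq : forall n, ctx LM n -> LM 'I_n -> R 'I_n -> R 'I_n -> Prop) :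
  conditions C Ct Ceq Cteq ->
  (forall n (G : ctx LM n) (T : LM 'I_n) (G' : ctx LM n),
      C _ (csnoc G T) -> C _ G' -> ctx_sim Ceq G G' ->
      exists T' : LM 'I_n, C _ (csnoc G' T') /\ ctx_sim Ceq (csnoc G T) (csnoc G' T')) /\
  (forall n (G : ctx LM n) (S : LM 'I_n) (o : R 'I_n) (G' : ctx LM n) (S' : LM 'I_n),
      Ct _ G S o -> ctx_sim Ceq (csnoc G S) (csnoc G' S') -> C _ (csnoc G' S') ->
      exists o' : R 'I_n, Ct _ G' S' o' /\ jdg_sim Ceq Cteq G' S' o' G S o).
Proof.
move=> cond; split.
  move=> n G T G' GT _ sim; exists T.
  have eqTT := c2b cond GT.
  split; first exact: (c2a cond (ctx_sim_Ceq cond sim eqTT)).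
  exact: sim_snoc.
move=> n G S o G' S' oS /ctx_sim_snocK [sim eqSS'] _.
have eqSS'' : Ceq n G' S S' := ctx_sim_Ceq cond sim eqSS'.
have eqoo : Cteq n G' S' o o.
  exact/(c4c cond eqSS'')/(ctx_sim_Cteq cond sim)/(c3b cond).
exists o; split; first exact: (c3a cond eqoo).
split=> //; constructor; [exact: (ctx_sim_sym cond sim) | exact: (c2c cond eqSS'')].
Qed.
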